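(* Assume all thermal noise is zero ($\mathbf N_T=\mathbf 0$, $\mathbf N_D=\mathbf 0$), and let $\hat{\mathbf H}=\mathbf Y_T\mathbf S_T^\dagger$ be the least-squares channel estimate. If the jammer is not eclipsed (in the sense of eclipsing with channel estimation defined in the context), then the optimization problem $$\min_{\tilde{\mathbf S}_D\in\mathcal S^{U\times D},\ \tilde{\mathbf P}\in\mathscr G_{B-I}(\mathbb C^B)}\ \big\|\tilde{\mathbf P}(\mathbf Y_D-\hat{\mathbf H}\tilde{\mathbf S}_D)\big\|_F^2$$ has the unique minimizer $(\hat{\mathbf P},\hat{\mathbf S}_D)=(\mathbf I_B-\mathbf J\mathbf J^\dagger,\ \mathbf S_D)$.
   Context: Let $B,U,I,T,D$ be positive integers with $B\ge U+I$ and $T\ge U$. Let $\mathcal S=\{(\pm1\pm i)/\sqrt2\}\subset\mathbb C$ (QPSK). Let $\mathbf H\in\mathbb C^{B\times U}$, $\mathbf J\in\mathbb C^{B\times I}$ with $[\mathbf H,\mathbf J]$ of full column rank $U+I$. Let $\mathbf S_T\in\mathbb C^{U\times T}$ be a pilot matrix of full row rank $U$ (so $\mathbf S_T\mathbf S_T^\dagger=\mathbf I_U$), $\mathbf S_D\in\mathcal S^{U\times D}$, $\mathbf W_T\in\mathbb C^{I\times T}$, $\mathbf W_D\in\mathbb C^{I\times D}$, noise $\mathbf N_T,\mathbf N_D$, and $\mathbf Y_T=\mathbf H\mathbf S_T+\mathbf J\mathbf W_T+\mathbf N_T$, $\mathbf Y_D=\mathbf H\mathbf S_D+\mathbf J\mathbf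 W_D+\mathbf N_D$. $\mathbf A^\dagger$ is the Moore–Penrose pseudoinverse. $\mathscr G_{B-I}(\mathbb C^B)$ denotes the set of $B\times B$ orthogonal projections onto $(B-I)$-dimensional subspaces of $\mathbb C^B$. Eclipsing with channel estimation: the jammer is eclipsed if there exists $\tilde{\mathbf S}_D\in\mathcal S^{U\times D}\setminus\{\mathbf S_D\}$ such that $\begin{bmatrix}\mathbf S_D-\tilde{\mathbf S}_D\\ \mathbf W_D-\mathbf W_T\mathbf S_T^\dagger\tilde{\mathbf S}_D\end{bmatrix}\in\mathbb C^{(U+I)\times D}$ has rank at most $I$. *)

(* Complex scalars: an arbitrary numClosedFieldType C
   (the algebraic model of the complex numbers, with conjugation x^* ). *)
From HB Require Import structures.
From mathcomp Require Import all_boot all_order all_algebra.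
From Stdlib Require Import ClassicalEpsilon.
Set Implicit Arguments.
Unset Strict Implicit.
Unset Printing Implicit Defensive.
Import Order.TTheory GRing.Theory Num.Theory.
Local Open Scope ring_scope.

Definition adjmx (C : numClosedFieldType) m n (A : 'M[C]_(m, n)) : 'M[C]_(n, m) :=
  (map_mx (fun x => x^*) A)^T.

Definition is_pinv (C : numClosedFieldType) m n (A : 'M[C]_(m, n)) (X : 'M[C]_(n, m)) : Prop :=
  [/\ A *m X *m A = A, X *m A *m X = X,
      adjmx (A *m X) = A *m X & adjmx (X *m A) = X *m A].

(* The Moore--Penrose pseudoinverse A^dagger (the unique X with is_pinv A X;
   chosen by Hilbert's epsilon, it exists for every matrix). *)
Definition pinv (C : numClosedFieldType) m n (A : 'M[C]_(m, n)) : 'M[C]_(n, m) :=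
  epsilon (inhabits 0) (is_pinv A).

Definition qpsk (C : numClosedFieldType) (x : C) : Prop :=
  exists a b : bool, x = ((-1) ^+ a + (-1) ^+ b * 'i) / sqrtC 2.

Definition qpsk_mx (C : numClosedFieldType) m n (S : 'M[C]_(m, n)) : Prop :=
  forall i j, qpsk (S i j).

Definition frob2 (C : numClosedFieldType) m n (A : 'M[C]_(m, n)) : C :=
  \sum_(i < m) \sum_(j < n) `|A i j| ^+ 2.

(* P is an orthogonal projection of C^B onto a k-dimensional subspace,
   i.e. P belongs to the Grassmannian G_k(C^B) viewed as projection matrices *)
Definition grass_proj (C : numClosedFieldType) B (k : nat) (P : 'M[C]_B) : Prop :=
  [/\ P *m P = P, adjmx P = P & \rank P = k].

Definition eclipsed (C : numClosedFieldType) U I T D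
  (S_T : 'M[C]_(U, T)) (S_D : 'M[C]_(U, D))
  (W_T : 'M[C]_(I, T)) (W_D : 'M[C]_(I, D)) : Prop :=
  exists St : 'M[C]_(U, D), [/\ qpsk_mx St, St <> S_D &
    (\rank (col_mx (S_D - St) (W_D - W_T *m pinv S_T *m St)) <= I)%N].

(** With no noise the least-squares estimate is [Hhat = H + J W_T S_T^†], so the
    residual [Y_D - Hhat St] equals [[H J]] applied to the stacked error
    [[S_D - St; W_D - W_T S_T^† St]]. A projection of rank [B - I] can only kill
    [[H J] M] when [\rank M <= I]; for [St <> S_D] this is exactly eclipsing. For
    [St = S_D] the residual is [P J E] with [E = W_D - W_T S_T^† S_D]. Flipping the
    sign of one QPSK symbol perturbs the stacked error by a rank-one term, so
    non-eclipsing forces [\rank E = I]; hence [P J = 0], and the only orthogonal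
    projection of rank [B - I] annihilating [J] is [I - J J^†]. *)
From HB Require Import structures.
From mathcomp Require Import all_boot all_order all_algebra.
From mathcomp Require Import zify.
From Stdlib Require Import ClassicalEpsilon.
Set Implicit Arguments.
Unset Strict Implicit.
Import Order.TTheory GRing.Theory Num.Theory.
Local Open Scope ring_scope.

Section Adjoint.
Variable C : numClosedFieldType.

Lemma adjmxM m n p (A : 'M[C]_(m, n)) (B : 'M[C]_(n, p)) :
  adjmx (A *m B) = adjmx B *m adjmx A.
Proof. by rewrite /adjmx map_mxM trmx_mul. Qed.

Lemma adjmxK m n (A : 'M[C]_(m, n)) : adjmx (adjmx A) = A.
Proof. by apply/matrixP => i j; rewrite !mxE conjCK. Qed.

Lemma adjmxB m n (A B : 'M[C]_(m, n)) : adjmx (A - B) = adjmx A - adjmx B.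
Proof. by apply/matrixP => i j; rewrite !mxE rmorphB. Qed.

Lemma adjmx1 n : adjmx (1%:M : 'M[C]_n) = 1%:M.
Proof. by rewrite /adjmx map_mx1 trmx1. Qed.

Lemma adjmx0 m n : adjmx (0 : 'M[C]_(m, n)) = 0.
Proof. by apply/matrixP => i j; rewrite !mxE conjC0. Qed.

Lemma adjmx_inv n (A : 'M[C]_n) : adjmx (invmx A) = invmx (adjmx A).
Proof. by rewrite /adjmx map_invmx trmx_inv. Qed.

Lemma mxrank_adj m n (A : 'M[C]_(m, n)) : \rank (adjmx A) = \rank A.
Proof. by rewrite /adjmx mxrank_tr mxrank_map. Qed.

Lemma frob2_ge0 m n (A : 'M[C]_(m, n)) : 0 <= frob2 A.
Proof. by apply: sumr_ge0 => i _; apply: sumr_ge0 => j _; rewrite exprn_ge0. Qed.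

Lemma frob2_eq0 m n (A : 'M[C]_(m, n)) : frob2 A = 0 -> A = 0.
Proof.
move=> /eqP; rewrite psumr_eq0 => [/allP rows|i _]; last first.
  by apply: sumr_ge0 => j _; rewrite exprn_ge0.
apply/matrixP => i j; rewrite mxE.
move: (rows i (mem_index_enum _)); rewrite psumr_eq0 => [/allP cols|k _]; last first.
  by rewrite exprn_ge0.
by move: (cols j (mem_index_enum _)); rewrite sqrf_eq0 normr_eq0 => /eqP.
Qed.

Lemma frob2_gt0 m n (A : 'M[C]_(m, n)) : A != 0 -> 0 < frob2 A.
Proof.
move=> nzA; rewrite lt_def frob2_ge0 andbT.
by apply: contra nzA => /eqP/frob2_eq0 ->.
Qed.

Lemma frob2_tr m n (A : 'M[C]_(m, n)) : frob2 A = \tr (A *m adjmx A).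
Proof.
apply: eq_bigr => i _; rewrite !mxE.
by apply: eq_bigr => j _; rewrite !mxE normCK.
Qed.

Lemma mulmx_adj_eq0 m n (A : 'M[C]_(m, n)) : A *m adjmx A = 0 -> A = 0.
Proof. by move=> AA0; apply: frob2_eq0; rewrite frob2_tr AA0 mxtrace0. Qed.

End Adjoint.

Section PseudoInverse.
Variable C : numClosedFieldType.

Lemma is_pinv_adj m n (A : 'M[C]_(m, n)) X : is_pinv A X -> is_pinv (adjmx A) (adjmx X).
Proof.
case=> h1 h2 h3 h4; split.
- by rewrite -!adjmxM mulmxA h1.
- by rewrite -!adjmxM mulmxA h2.
- by rewrite -adjmxM h4.
- by rewrite -adjmxM h3.
Qed.

Lemma pinvP m n (A : 'M[C]_(m, n)) : (exists X, is_pinv A X) -> is_pinv A (pinv A).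
Proof. exact: epsilon_spec. Qed.

Lemma gram_unitmx m n (A : 'M[C]_(m, n)) : \rank A = n -> adjmx A *m A \in unitmx.
Proof.
move=> rkA; rewrite -row_free_unit -kermx_eq0; apply/eqP.
set K := kermx _.
have KA0 : K *m adjmx A *m adjmx (K *m adjmx A) = 0.
  by rewrite adjmxM adjmxK !mulmxA -(mulmxA K) mulmx_ker mul0mx.
have freeA : row_free (adjmx A) by rewrite /row_free mxrank_adj rkA.
by apply: (row_free_inj freeA); rewrite mul0mx (mulmx_adj_eq0 KA0).
Qed.

Lemma is_pinv_col_free m n (A : 'M[C]_(m, n)) : \rank A = n -> is_pinv A (pinv A).
Proof.
move=> rkA; apply: pinvP; set G := adjmx A *m A.
have XA1 : invmx G *m adjmx A *m A = 1%:M by rewrite -mulmxA mulVmx ?gram_unitmx.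
exists (invmx G *m adjmx A); split.
- by rewrite -mulmxA XA1 mulmx1.
- by rewrite XA1 mul1mx.
- by rewrite !adjmxM adjmxK adjmx_inv adjmxM adjmxK mulmxA.
- by rewrite XA1 adjmx1.
Qed.

Lemma is_pinv_row_full m n (A : 'M[C]_(m, n)) : \rank A = m -> is_pinv A (pinv A).
Proof.
move=> rkA; apply: pinvP; exists (adjmx (pinv (adjmx A))).
rewrite -[A in is_pinv A]adjmxK; apply: is_pinv_adj.
by apply: is_pinv_col_free; rewrite mxrank_adj.
Qed.

Lemma mulmx_pinv_row_full m n (A : 'M[C]_(m, n)) : \rank A = m -> A *m pinv A = 1%:M.
Proof.
move=> rkA; have [AXA _ _ _] := is_pinv_row_full rkA.
have /row_freeP [R AR1] : row_free A by rewrite /row_free rkA.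
by rewrite -AR1 -{1}[pinv A]mulmx1 -AR1 !mulmxA AXA.
Qed.

End PseudoInverse.

Section Rank.
Variable F : fieldType.

Lemma mxrank_row_mx_leq m n1 n2 (A : 'M[F]_(m, n1)) (B : 'M[F]_(m, n2)) :
  (\rank (row_mx A B) <= \rank A + \rank B)%N.
Proof.
have -> : row_mx A B = row_mx A 0 + row_mx 0 B by rewrite add_row_mx addr0 add0r.
by rewrite -(rank_row_mx0 n2 A) -(rank_row_0mx n1 B) mxrank_add.
Qed.

Lemma mxrankM_col_free m n p (G : 'M[F]_(m, n)) (M : 'M[F]_(n, p)) :
  \rank G = n -> \rank (G *m M) = \rank M.
Proof.
move=> rkG; rewrite -mxrank_tr trmx_mul mxrankMfree ?mxrank_tr //.
by rewrite /row_free mxrank_tr rkG.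
Qed.

Lemma mxrank_mul_eq0 b p (P : 'M[F]_b) (M : 'M[F]_(b, p)) :
  P *m M = 0 -> (\rank M + \rank P <= b)%N.
Proof.
move=> PM0; have : (M^T <= kermx P^T)%MS.
  by apply/sub_kermxP; rewrite -trmx_mul PM0 trmx0.
by move/mxrankS; rewrite mxrank_ker !mxrank_tr; have := rank_leq_row P; lia.
Qed.

End Rank.

Section Projection.
Variables (C : numClosedFieldType) (b k : nat) (J : 'M[C]_(b, k)).
Hypothesis rkJ : \rank J = k.

Let Jpinv := is_pinv_col_free rkJ.

Lemma mulmx_compl_pinv : (1%:M - J *m pinv J) *m J = 0.
Proof. by case: Jpinv => JXJ _ _ _; rewrite mulmxBl mul1mx JXJ subrr. Qed.

Lemma grass_proj_compl_pinv : grass_proj (b - k) (1%:M - J *m pinv J).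
Proof.
have [JXJ _ adjJX _] := Jpinv; split.
- by rewrite mulmxBl mul1mx mulmxBr mulmx1 mulmxA JXJ subrr subr0.
- by rewrite adjmxB adjmx1 adjJX.
have := mxrank_mul_eq0 mulmx_compl_pinv; have := mxrankM_maxl J (pinv J).
have := mxrank_add (1%:M - J *m pinv J) (J *m pinv J).
rewrite subrK mxrank1 rkJ.
by set r := \rank (1%:M - _); set s := \rank (J *m _); lia.
Qed.

Lemma grass_proj_annihilator_eq (P : 'M[C]_b) :
  grass_proj (b - k) P -> P *m J = 0 -> P = 1%:M - J *m pinv J.
Proof.
case=> PP adjP rkP PJ0; have [JXJ _ adjJX _] := Jpinv.
set Q := 1%:M - P.
have QJ : Q *m J = J by rewrite mulmxBl mul1mx PJ0 subr0.
have PQ0 : P *m Q = 0 by rewrite mulmxBr mulmx1 PP subrr.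
have JQ : (J^T <= Q^T)%MS by rewrite -QJ trmx_mul submxMl.
have /eqmxP eqJQ : (J^T == Q^T)%MS.
  rewrite -(mxrank_leqif_eq JQ) !mxrank_tr; have := mxrankS JQ.
  have := mxrank_mul_eq0 PQ0; have := rank_leq_row J.
  by rewrite !mxrank_tr rkP rkJ; lia.
have /submxP [Z QZ] : (Q^T <= J^T)%MS by rewrite eqJQ.
have JXQ : J *m pinv J *m Q = Q.
  by rewrite -[Q]trmxK QZ trmx_mul trmxK !mulmxA JXJ.
(* [P] and [J J^†] are self-adjoint and [P J = 0], so [J J^† P = (P J J^†)^H = 0]. *)
have JXP : J *m pinv J *m P = 0.
  by rewrite -adjJX -adjP -adjmxM mulmxA PJ0 mul0mx adjmx0.
have JXQ' : J *m pinv J = Q by rewrite -[RHS]JXQ mulmxBr mulmx1 JXP subr0.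
by rewrite JXQ' subKr.
Qed.

End Projection.

Section Qpsk.
Variable C : numClosedFieldType.

Lemma qpsk_neq0 (x : C) : qpsk x -> x != 0.
Proof.
case=> a [b ->]; rewrite mulf_eq0 invr_eq0 sqrtC_eq0 negb_or pnatr_eq0 andbT.
apply/negP => /eqP re_im0.
have : ((-1) ^+ b * 'i) ^+ 2 = ((-1) ^+ a) ^+ 2 :> C.
  by move/eqP: re_im0; rewrite addr_eq0 => /eqP ->; rewrite sqrrN.
rewrite exprMn !sqrr_sign mul1r sqrCi => /eqP.
by rewrite -subr_eq0 -opprD oppr_eq0 -mulr2n pnatr_eq0.
Qed.

Lemma qpskN (x : C) : qpsk x -> qpsk (- x).
Proof.
case=> a [b ->]; exists (~~ a), (~~ b); rewrite -mulNr; congr (_ / _).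
by case: a; case: b => /=; rewrite ?expr1 ?expr0 ?opprD ?mulNr ?mul1r ?mulN1r ?opprK.
Qed.

Lemma qpsk_mx_flip m n (S : 'M[C]_(m, n)) (i0 : 'I_m) (j0 : 'I_n) : qpsk_mx S ->
  exists St : 'M[C]_(m, n), [/\ qpsk_mx St, St <> S & (\rank (S - St)%R <= 1)%N].
Proof.
move=> qS; pose St := \matrix_(i, j) (if (i == i0) && (j == j0) then - S i j else S i j).
have StE : S - St = (S i0 j0 *+ 2) *: delta_mx i0 j0.
  apply/matrixP => i j; rewrite !mxE.
  case: ifP => [/andP [/eqP -> /eqP ->]|_]; last by rewrite subrr mulr0.
  by rewrite opprK mulr1 mulr2n.
exists St; split.
- by move=> i j; rewrite mxE; case: ifP => _; [apply: qpskN|]; apply: qS.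
- move=> /(congr1 (fun M => (S - M) i0 j0)); rewrite StE subrr !mxE !eqxx mulr1.
  by move/eqP; rewrite mulrn_eq0 /= (negbTE (qpsk_neq0 (qS i0 j0))).
- by rewrite StE (leq_trans (mxrank_scale _ _)) ?mxrank_delta.
Qed.

End Qpsk.

Lemma not_eclipsed_rank (C : numClosedFieldType) U I T D
    (S_T : 'M[C]_(U, T)) (S_D : 'M[C]_(U, D)) (W_T : 'M[C]_(I, T)) (W_D : 'M[C]_(I, D))
    (i0 : 'I_U) (j0 : 'I_D) :
  qpsk_mx S_D -> ~ eclipsed S_T S_D W_T W_D ->
  \rank (W_D - W_T *m pinv S_T *m S_D) = I.
Proof.
move=> qS not_ecl; set E := W_D - _.
have [St [qSt neSt rk1]] := qpsk_mx_flip i0 j0 qS.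
set L := col_mx (1%:M : 'M[C]_U) (W_T *m pinv S_T).
have errE : col_mx (S_D - St) (W_D - W_T *m pinv S_T *m St) = L *m (S_D - St) + col_mx 0 E.
  rewrite mul_col_mx mul1mx add_col_mx addr0; congr col_mx.
  by rewrite /E mulmxBr [RHS]addrC addrA subrK.
have not_le : ~ (\rank (col_mx (S_D - St) (W_D - W_T *m pinv S_T *m St)) <= I)%N.
  by move=> le; apply: not_ecl; exists St.
have := mxrank_add (L *m (S_D - St)) (col_mx 0 E); rewrite -errE rank_col_0mx.
have := leq_trans (mxrankM_maxr L _) rk1; have := rank_leq_row E.
by set s := \rank (L *m _); lia.
Qed.

Unset Implicit Arguments.

Theorem theorem3 (C : numClosedFieldType) (B U I T D : nat)
  (H : 'M[C]_(B, U)) (J : 'M[C]_(B, I))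
  (S_T : 'M[C]_(U, T)) (S_D : 'M[C]_(U, D))
  (W_T : 'M[C]_(I, T)) (W_D : 'M[C]_(I, D))
  (N_T : 'M[C]_(B, T)) (N_D : 'M[C]_(B, D)) :
  (0 < B)%N -> (0 < U)%N -> (0 < I)%N -> (0 < T)%N -> (0 < D)%N ->
  (U + I <= B)%N -> (U <= T)%N ->
  \rank (row_mx H J) = (U + I)%N ->
  \rank S_T = U ->
  qpsk_mx S_D ->
  N_T = 0 -> N_D = 0 ->
  let Y_T := H *m S_T + J *m W_T + N_T in
  let Y_D := H *m S_D + J *m W_D + N_D in
  let Hhat := Y_T *m pinv S_T in
  let obj := fun (P : 'M[C]_B) (St : 'M[C]_(U, D)) => frob2 (P *m (Y_D - Hhat *m St)) in
  let Phat := 1%:M - J *m pinv J in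
  ~ eclipsed S_T S_D W_T W_D ->
  grass_proj (B - I) Phat /\
  (forall (P : 'M[C]_B) (St : 'M[C]_(U, D)),
      grass_proj (B - I) P -> qpsk_mx St ->
      (P, St) <> (Phat, S_D) -> obj Phat S_D < obj P St).
Proof.
move=> _ U_gt0 _ _ D_gt0 UIB _ rkG rkS qS NT0 ND0 Y_T Y_D Hhat obj Phat not_ecl.
have rkJ : \rank J = I.
  have := mxrank_row_mx_leq H J; rewrite rkG.
  by have := rank_leq_col H; have := rank_leq_col J; lia.
have residualE St : Y_D - Hhat *m St =
    row_mx H J *m col_mx (S_D - St) (W_D - W_T *m pinv S_T *m St).
  rewrite mul_row_col /Hhat /Y_T /Y_D NT0 ND0 !addr0 mulmxDl -(mulmxA H).
  by rewrite mulmx_pinv_row_full // mulmx1 !mulmxBr mulmxDl !mulmxA opprD addrACA.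
have objPS0 : obj Phat S_D = 0.
  rewrite /obj residualE subrr mul_row_col mulmx0 add0r mulmxA mulmx_compl_pinv //.
  by rewrite mul0mx frob2_tr mul0mx mxtrace0.
split=> [|P St projP qSt neq]; first exact: grass_proj_compl_pinv.
rewrite objPS0 /obj residualE frob2_gt0 //; apply/eqP => res0.
have rkP : \rank P = (B - I)%N by case: projP.
have [eqSt | neSt] := eqVneq St S_D; last first.
  apply: not_ecl; exists St; split=> //; first exact/eqP.
  have := mxrank_mul_eq0 res0; rewrite mxrankM_col_free // rkP.
  by set r := \rank (col_mx _ _); lia.
move: res0; rewrite eqSt subrr mul_row_col mulmx0 add0r mulmxA => PJE0.
have freeE : row_free (W_D - W_T *m pinv S_T *m S_D).
  by rewrite /row_free (not_eclipsed_rank (Ordinal U_gt0) (Ordinal D_gt0) qS not_ecl).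
have PJ0 : P *m J = 0 by apply: (row_free_inj freeE); rewrite mul0mx.
apply: neq; rewrite eqSt (grass_proj_annihilator_eq rkJ projP PJ0); reflexivity.
Qed.
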